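(* Assume that the hairpin completion $\mathcal{H}_k(L_1,L_2)$ is regular and that every state of the NFA $\mathcal{A}$ is reachable from an initial state and can reach a final state. Let $\kappa$ be a non-trivial strongly connected component of $\mathcal{A}$ with $N_\kappa$ states, let $A\in\kappa$ and let $A\xrightarrow{v_A}A$ be a path in $\kappa$ with $1\le|v_A|\le N_\kappa$, and let $A\xrightarrow{w}F$ be a path in $\mathcal{A}$ from $A$ to a final state $F$. Then $w$ is a prefix of some word in $v_A^+$. In addition, the word $v_A$ is uniquely determined by the conditions $A\xrightarrow{v_A}A$ and $1\le|v_A|\le N_\kappa$; the loop $A\xrightarrow{v_A}A$ visits every other state $B\in\kappa$ exactly once, so it forms a Hamiltonian cycle of $\kappa$, and $|v_A|=N_\kappa$.
   Context: $\Sigma$ is a finite alphabet with involution $a\mapsto\overline a$ (bijection, $\overline{\overline a}=a$), extended to words by $\overline{a_1\cdots a_m}=\overline{a_m}\cdots\overline{a_1}$ and to languages elementwise. $k\ge1$ is a fixed integer, $[k]=\{0,\dots,k\}$. $\mathcal{H}_k(L_1,L_2)=\{\gamma\alpha\beta\overline\alpha\overline\gamma: (\gamma\alpha\beta\overline\alpha\in L_1\text{ or }\alpha\beta\overline\alpha\overline\gamma\in L_2),\ |\alpha|=k\}$. $\mathcal{A}_1$ is a complete DFA accepting $L_1$ (states $\mathcal{Q}_1$, initial $q_{01}$, final $\mathcal{F}_1$); $\mathcal{A}_2$ a complete DFA accepting $\overline{L_2}$ (states $\mathcal{Q}_2$, initial $q_{02}$, final $\mathcal{F}_2$); $p\cdot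 w$ is the state reached from $p$ reading $w$. $\mathcal{Q}=\{(q_{01}\cdot w,q_{02}\cdot w): w\in\Sigma^*\}$, $P\cdot a=(p_1\cdot a,p_2\cdot a)$. A quadruple $(p_1,p_2,q_1,q_2)$ is a bridge if $\{\beta: p_1\cdot\beta=q_1,\ p_2\cdot\overline\beta=q_2\}\neq\emptyset$. The NFA $\mathcal{A}$ has states $((p_1,p_2),q_1,q_2,\ell)$ with $(p_1,p_2)\in\mathcal{Q}$, $\ell\in[k]$, $(p_1,p_2,q_1,q_2)$ a bridge; $a$-transitions (present when both endpoints are states): $(P,q_1\cdot\overline a,q_2\cdot\overline a,0)\xrightarrow{a}(P\cdot a,q_1,q_2,0)$ if $q_1\cdot\overline a\notin\mathcal{F}_1$ and $q_2\cdot\overline a\notin\mathcal{F}_2$; $(P,q_1\cdot\overline a,q_2\cdot\overline a,0)\xrightarrow{a}(P\cdot a,q_1,q_2,1)$ if $q_1\cdot\overline a\in\mathcal{F}_1$ or $q_2\cdot\overline a\in\mathcal{F}_2$; $(P,q_1\cdot\overline a,q_2\cdot\overline a,\ell)\xrightarrow{a}(P\cdot a,q_1,q_2,\ell+1)$ for $1\le\ell<k$. Initial states: $((q_{01},q_{02}),q_1',q_2',0)$; final states: all states at level $k$. A strongly connected component of $\mathcal{A}$ (as a directed graph) is non-trivial if it contains a path of length $\ge1$ from a state to itself. *)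

From mathcomp Require Import all_boot.
Set Implicit Arguments. Unset Strict Implicit. Unset Printing Implicit Defensive.

Record dfa (Sigma : finType) := DFA {
  dstate : finType;
  dtrans : dstate -> Sigma -> dstate;
  dinit : dstate;
  dfinal : {set dstate} }.

Definition run (Sigma : finType) (M : dfa Sigma) (p : dstate M) (w : seq Sigma) : dstate M :=
  foldl (@dtrans _ M) p w.

Definition accepts (Sigma : finType) (M : dfa Sigma) (w : seq Sigma) : Prop :=
  run (dinit M) w \in dfinal M.

Definition language (Sigma : finType) := seq Sigma -> Prop.

Definition regular (Sigma : finType) (L : language Sigma) : Prop :=
  exists M : dfa Sigma, forall w, L w <-> accepts M w.

Definition barw (Sigma : finType) (bar : Sigma -> Sigma) (w : seq Sigma) : seq Sigma :=
  rev (map bar w).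

Definition hairpin (Sigma : finType) (bar : Sigma -> Sigma) (k : nat)
    (L1 L2 : language Sigma) : language Sigma :=
  fun u => exists g al be : seq Sigma,
    size al = k /\
    u = g ++ al ++ be ++ barw bar al ++ barw bar g /\
    (L1 (g ++ al ++ be ++ barw bar al) \/ L2 (al ++ be ++ barw bar al ++ barw bar g)).

Definition L1 (Sigma : finType) (A1 : dfa Sigma) : language Sigma := fun w => accepts A1 w.
(* A2 accepts bar(L2), i.e. L2 = { w | bar w accepted by A2 } *)
Definition L2 (Sigma : finType) (bar : Sigma -> Sigma) (A2 : dfa Sigma) : language Sigma :=
  fun w => accepts A2 (barw bar w).

Section NFA.
Variables (Sigma : finType) (bar : Sigma -> Sigma) (k : nat) (A1 A2 : dfa Sigma).

Definition nstate : finType :=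
  (dstate A1 * dstate A2 * dstate A1 * dstate A2 * 'I_k.+1)%type.

Definition inQ (p1 : dstate A1) (p2 : dstate A2) : Prop :=
  exists w, p1 = run (dinit A1) w /\ p2 = run (dinit A2) w.

Definition bridge (p1 : dstate A1) (p2 : dstate A2) (q1 : dstate A1) (q2 : dstate A2) : Prop :=
  exists beta : seq Sigma, run p1 beta = q1 /\ run p2 (barw bar beta) = q2.

Definition isState (x : nstate) : Prop :=
  let '(p1, p2, q1, q2, l) := x in inQ p1 p2 /\ bridge p1 p2 q1 q2.

Definition step (x : nstate) (a : Sigma) (y : nstate) : Prop :=
  isState x /\ isState y /\
  let '(p1, p2, r1, r2, l) := x in
  let '(p1', p2', q1, q2, l') := y in
  [/\ p1' = dtrans p1 a, p2' = dtrans p2 a,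
      r1 = dtrans q1 (bar a), r2 = dtrans q2 (bar a) &
      [\/ [/\ nat_of_ord l = 0, nat_of_ord l' = 0,
              r1 \notin dfinal A1 & r2 \notin dfinal A2],
          [/\ nat_of_ord l = 0, nat_of_ord l' = 1 &
              (r1 \in dfinal A1 \/ r2 \in dfinal A2)]
        | [/\ 1 <= nat_of_ord l, nat_of_ord l < k & nat_of_ord l' = (nat_of_ord l).+1]]].

Definition initial (x : nstate) : Prop :=
  isState x /\
  let '(p1, p2, _, _, l) := x in [/\ p1 = dinit A1, p2 = dinit A2 & nat_of_ord l = 0].

Definition final (x : nstate) : Prop :=
  isState x /\ let '(_, _, _, _, l) := x in nat_of_ord l = k.

Fixpoint lpath (x : nstate) (w : seq Sigma) (xs : seq nstate) : Prop :=
  match w, xs with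
  | [::], [::] => True
  | a :: w', y :: xs' => step x a y /\ lpath y w' xs'
  | _, _ => False
  end.

Definition reach (x : nstate) (w : seq Sigma) (y : nstate) : Prop :=
  exists xs, lpath x w xs /\ last x xs = y.

Definition is_scc (K : {set nstate}) : Prop :=
  exists x, isState x /\
    forall y, y \in K <-> ((exists u, reach x u y) /\ (exists u, reach y u x)).

Definition nontrivial_scc (K : {set nstate}) : Prop :=
  exists x, x \in K /\ exists u, 1 <= size u /\ reach x u x.

End NFA.

(* Let [u] lead from an initial state to [A], and let [F] carry a bridge word
   [beta].  Every word [x = u v^m w] is accepted along a path whose first
   "hit" (the first cut [x = gamma alpha] at which the hairpin condition holds
   for [gamma alpha beta bar(alpha)] or [alpha beta bar(alpha) bar(gamma)]) lies
   exactly [k] letters before its end.  A DFA for the completion cannot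
   distinguish [u v^m] from [u v^(m+t)] for suitable [m] and [t > 0], so
   [u v^(m+t) w beta bar(u v^m w)] lies in the completion too; unless [w] is a
   prefix of [v^t], this word exhibits an earlier hit.
   Hence two loops through a state of the component commute, so they start with
   the same letter and continue to the same state: the component is
   deterministic.  Every path from [A] inside it then follows the powers of
   [v_A], so the loop visits all states of the component, each exactly once. *)

From mathcomp Require Import all_boot zify.
Set Implicit Arguments. Unset Strict Implicit. Unset Printing Implicit Defensive.

Lemma finite_pigeonhole (T : finType) (f : nat -> T) : exists i j, i < j /\ f i = f j.
Proof.
have /(uniqPn (f 0)) [i [j [lt_ij]]] : ~~ uniq (mkseq f #|T|.+1).
  apply/negP => /card_uniqP; rewrite size_mkseq => card_f.
  by have := max_card (mem (mkseq f #|T|.+1)); rewrite card_f ltnn.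
rewrite size_mkseq => lt_jT; rewrite !nth_mkseq ?(ltn_trans lt_ij) //.
by exists i, j.
Qed.

Section Powers.
Variable T : eqType.
Implicit Types s p q : seq T.

Lemma size_flatten_nseq n s : size (flatten (nseq n s)) = n * size s.
Proof. by elim: n => //= n IHn; rewrite size_cat IHn mulSn. Qed.

Lemma flatten_nseqD m n s :
  flatten (nseq (m + n) s) = flatten (nseq m s) ++ flatten (nseq n s).
Proof. by rewrite nseqD flatten_cat. Qed.

Lemma prefix_flatten_nseq_eq m n s p q :
  prefix p (flatten (nseq m s)) -> prefix q (flatten (nseq n s)) ->
  size p = size q -> p = q.
Proof.
wlog le_mn : m n p q / m <= n => [wlog_mn pre_p pre_q size_pq|].
  case: (leqP m n) => [le|/ltnW le]; first exact: wlog_mn pre_p pre_q size_pq.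
  exact/esym/(wlog_mn n m).
rewrite -(subnKC le_mn) flatten_nseqD !prefixE => /eqP pre_p /eqP pre_q size_pq.
have le_p : size p <= size (flatten (nseq m s)) by rewrite -pre_p size_take_min; lia.
by rewrite -pre_p -pre_q -size_pq takel_cat.
Qed.

Lemma all_take (a : pred T) n s : all a s -> all a (take n s).
Proof. by rewrite -{1}(cat_take_drop n s) all_cat => /andP []. Qed.

Lemma all_flatten_nseq (a : pred T) n s : all a s -> all a (flatten (nseq n s)).
Proof. by move=> all_s; elim: n => //= n IHn; rewrite all_cat all_s. Qed.

Lemma eqseq_catr s1 s2 t1 t2 :
  size t1 = size t2 -> (s1 ++ t1 == s2 ++ t2) = (s1 == s2) && (t1 == t2).
Proof.
move=> st; have [ss|ns] := eqVneq (size s1) (size s2); first exact: eqseq_cat.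
have /negbTE -> : s1 != s2 by apply: contraNneq ns => ->.
by apply/negbTE; apply: contraNneq ns => /(congr1 size); rewrite !size_cat st; lia.
Qed.

End Powers.

Section Hairpin.
Variables (Sigma : finType) (bar : Sigma -> Sigma).
Implicit Types s t u x beta : seq Sigma.

Lemma size_barw s : size (barw bar s) = size s.
Proof. by rewrite size_rev size_map. Qed.

Lemma barw_cat s t : barw bar (s ++ t) = barw bar t ++ barw bar s.
Proof. by rewrite /barw map_cat rev_cat. Qed.

Hypothesis bar_inv : involutive bar.

Lemma barwK : involutive (barw bar).
Proof. by move=> s; rewrite /barw map_rev revK -map_comp (eq_map bar_inv) map_id. Qed.

Lemma barw_cat_barw s t u : barw bar (s ++ t ++ barw bar u) = u ++ barw bar t ++ barw bar s.
Proof. by rewrite !barw_cat barwK catA. Qed.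

Variables (k : nat) (La Lb : language Sigma).

(* The cut [x = gamma ++ alpha] with [alpha = drop j x]; it witnesses
   membership in the completion when [j = size x - k], i.e. [|alpha| = k]. *)
Definition hairpin_hit beta x j : Prop :=
  La (x ++ beta ++ barw bar (drop j x)) \/ Lb (drop j x ++ beta ++ barw bar x).

Lemma hairpin_hit_mem beta x :
  k <= size x -> hairpin_hit beta x (size x - k) ->
  hairpin bar k La Lb (x ++ beta ++ barw bar x).
Proof.
move=> le_kx hit; set j := size x - k.
exists (take j x), (drop j x), beta; split; first by rewrite size_drop; lia.
split; first by rewrite -barw_cat cat_take_drop [RHS]catA cat_take_drop.
by case: hit; [left; rewrite catA cat_take_drop | right; rewrite -barw_cat cat_take_drop].
Qed.

Lemma hairpin_mismatch beta (x0 x1 : seq Sigma) :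
  hairpin bar k La Lb (x1 ++ beta ++ barw bar x0) ->
  size x0 <= size x1 -> ~~ prefix x0 x1 ->
  exists2 j, j + k < size x0 &
    La (x1 ++ beta ++ barw bar (drop j x0)) \/ Lb (drop j x1 ++ beta ++ barw bar x0).
Proof.
move=> [g [al [be [size_al [def_z mem_z]]]]] le_x01 not_pre.
have short : size g + k < size x0.
  rewrite ltnNge; apply: contra not_pre => long; rewrite prefixE.
  have long' : size x0 <= size (g ++ al) by rewrite size_cat size_al.
  rewrite -(takel_cat (beta ++ barw bar x0)) //.
  rewrite -[X in _ == X](take_size_cat (barw bar beta ++ barw bar x1) (erefl _)).
  rewrite -barw_cat_barw def_z.
  have -> : g ++ al ++ be ++ barw bar al ++ barw bar g = (g ++ al) ++ be ++ barw bar (g ++ al).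
    by rewrite barw_cat -!catA.
  by rewrite barw_cat_barw !(takel_cat _ long').
exists (size g) => //.
case: mem_z => [mem_z | mem_z]; [left | right].
  have /eqP : (x1 ++ beta ++ barw bar (drop (size g) x0)) ++ barw bar (take (size g) x0)
               = (g ++ al ++ be ++ barw bar al) ++ barw bar g.
    by rewrite -!catA -barw_cat cat_take_drop -def_z.
  rewrite eqseq_catr; last by rewrite !size_barw size_takel //; lia.
  by case/andP => /eqP ->.
have -> : drop (size g) x1 ++ beta ++ barw bar x0 = al ++ be ++ barw bar al ++ barw bar g.
  by rewrite -[RHS](drop_size_cat _ (erefl (size g))) -def_z drop_cat ifT //; lia.
exact: mem_z.
Qed.

End Hairpin.

Section Automaton.
Variables (Sigma : finType) (bar : Sigma -> Sigma) (k : nat) (A1 A2 : dfa Sigma).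
Local Notation state := (nstate k A1 A2).
Implicit Types (x y z X : state) (u s : seq Sigma) (xs ys : seq state).

Lemma run_cat (D : dfa Sigma) (q : dstate D) s t : run q (s ++ t) = run (run q s) t.
Proof. exact: foldl_cat. Qed.

Lemma run_barw_loop (D : dfa Sigma) (q : dstate D) s l :
  run q (barw bar l) = q -> run q (barw bar (s ++ l)) = run q (barw bar s).
Proof. by move=> loop_q; rewrite barw_cat run_cat loop_q. Qed.

Definition p1_of x : dstate A1 := x.1.1.1.1.
Definition p2_of x : dstate A2 := x.1.1.1.2.
Definition q1_of x : dstate A1 := x.1.1.2.
Definition q2_of x : dstate A2 := x.1.2.
Definition level_of x : nat := x.2.

Lemma nstate_eq x y :
  p1_of x = p1_of y -> p2_of x = p2_of y -> q1_of x = q1_of y -> q2_of x = q2_of y ->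
  level_of x = level_of y -> x = y.
Proof.
case: x => [[[[? ?] ?] ?] ?]; case: y => [[[[? ?] ?] ?] ?] /=.
by rewrite /p1_of /p2_of /q1_of /q2_of /level_of /= => -> -> -> -> /val_inj ->.
Qed.

Lemma stepE x a y : step bar x a y ->
  [/\ isState bar y, p1_of y = dtrans (p1_of x) a, p2_of y = dtrans (p2_of x) a,
      q1_of x = dtrans (q1_of y) (bar a) & q2_of x = dtrans (q2_of y) (bar a)] /\
  [\/ [/\ level_of x = 0, level_of y = 0, q1_of x \notin dfinal A1 & q2_of x \notin dfinal A2],
      [/\ level_of x = 0, level_of y = 1 & (q1_of x \in dfinal A1 \/ q2_of x \in dfinal A2)]
    | [/\ 1 <= level_of x, level_of x < k & level_of y = (level_of x).+1]].
Proof.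
case: x => [[[[? ?] ?] ?] ?]; case: y => [[[[? ?] ?] ?] ?].
move=> [_ [state_y [e1 e2 e3 e4 levels]]].
by rewrite /p1_of /p2_of /q1_of /q2_of /level_of; split.
Qed.

Lemma initialE x :
  initial bar x -> [/\ p1_of x = dinit A1, p2_of x = dinit A2 & level_of x = 0].
Proof. by case: x => [[[[? ?] ?] ?] ?] [_ []]. Qed.

Lemma finalE x : final bar x ->
  level_of x = k /\
  exists beta, run (p1_of x) beta = q1_of x /\ run (p2_of x) (barw bar beta) = q2_of x.
Proof. by case: x => [[[[? ?] ?] ?] ?] [[_ bridge_x] level_x]. Qed.

Lemma lpath_size x u xs : lpath bar x u xs -> size xs = size u.
Proof. by elim: u x xs => [|a u IHu] x [|y xs] //= [_ /IHu ->]. Qed.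

Lemma lpath_cat x u v xs ys :
  lpath bar x u xs -> lpath bar (last x xs) v ys -> lpath bar x (u ++ v) (xs ++ ys).
Proof.
by elim: u x xs => [|a u IHu] x [|y xs] //= [step_xy path_y] /(IHu _ _ path_y).
Qed.

Lemma lpath_take n x u xs : lpath bar x u xs -> lpath bar x (take n u) (take n xs).
Proof.
by elim: u x xs n => [|a u IHu] x [|y xs] [|n] //= [step_xy /(IHu _ _ n)].
Qed.

Lemma lpath_flatten_nseq n x u xs : lpath bar x u xs -> last x xs = x ->
  lpath bar x (flatten (nseq n u)) (flatten (nseq n xs)).
Proof.
move=> path_x loop_x; elim: n => //= n IHn.
by apply: lpath_cat => //; rewrite loop_x.
Qed.

Lemma reach_cat x y z u v : reach bar x u y -> reach bar y v z -> reach bar x (u ++ v) z.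
Proof.
move=> [xs [path_x <-]] [ys [path_y <-]].
by exists (xs ++ ys); rewrite last_cat; split => //; apply: lpath_cat.
Qed.

Lemma reach_step x a y : step bar x a y -> reach bar x [:: a] y.
Proof. by exists [:: y]. Qed.

Lemma reach_flatten_nseq n x u : reach bar x u x -> reach bar x (flatten (nseq n u)) x.
Proof.
move=> [xs [path_x loop_x]]; exists (flatten (nseq n xs)); split.
  exact: lpath_flatten_nseq.
by elim: n => //= n IHn; rewrite last_cat loop_x.
Qed.

Lemma reach_isState x u y : reach bar x u y -> 0 < size u -> isState bar y.
Proof.
move=> [xs [path_x <-]] {y}.
elim: u x xs path_x => [|a u IHu] x [|y xs] //= [/stepE [[state_y _ _ _ _] _]].
by case: u IHu => [|b u] IHu path_y _; [case: xs path_y | apply: IHu path_y _].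
Qed.

Lemma lpath_runE x u xs (z := last x xs) : lpath bar x u xs ->
  [/\ p1_of z = run (p1_of x) u, p2_of z = run (p2_of x) u,
      q1_of x = run (q1_of z) (barw bar u) & q2_of x = run (q2_of z) (barw bar u)].
Proof.
rewrite {}/z; elim: u x xs => [|a u IHu] x [|y xs] //= [/stepE [[_ e1 e2 e3 e4] _]].
move=> /IHu [-> -> f3 f4]; rewrite e1 e2 e3 e4 f3 f4.
by rewrite /barw /= rev_cons -cats1 !run_cat.
Qed.

Lemma reach_runE x u z : reach bar x u z ->
  [/\ p1_of z = run (p1_of x) u, p2_of z = run (p2_of x) u,
      q1_of x = run (q1_of z) (barw bar u) & q2_of x = run (q2_of z) (barw bar u)].
Proof. by move=> [xs [/lpath_runE runs <-]]. Qed.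

Lemma lpath_level_up x u xs : lpath bar x u xs -> 0 < level_of x ->
  level_of (last x xs) = level_of x + size u.
Proof.
elim: u x xs => [|a u IHu] x [|y xs] //=; first by rewrite addn0.
move=> [/stepE [_ [[lev_x _ _ _]|[lev_x _ _]|[_ _ lev_y]]] /IHu IH] pos_x;
  try by rewrite lev_x in pos_x.
by rewrite IH lev_y // addSnnS.
Qed.

Lemma loop_level0 x u : reach bar x u x -> 0 < size u -> level_of x = 0.
Proof.
move=> [xs [path_x loop_x]] pos_u; apply/eqP; rewrite -leqn0 leqNgt; apply/negP => pos_x.
by have := lpath_level_up path_x pos_x; rewrite loop_x; lia.
Qed.

Definition q_accepts z s : Prop :=
  run (q1_of z) (barw bar s) \in dfinal A1 \/ run (q2_of z) (barw bar s) \in dfinal A2.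

(* Level 0 -> 1 is the only step that may (and must) pass an accepting pair of
   q-states; levels then rise by one per letter, so it happens [k] letters before the end. *)
Lemma lpath_level_hit x u xs (z := last x xs) : 0 < k ->
  lpath bar x u xs -> level_of x = 0 -> level_of z = k ->
  [/\ k <= size u, q_accepts z (drop (size u - k) u)
    & forall j, j + k < size u -> ~ q_accepts z (drop j u)].
Proof.
rewrite {}/z => k_gt0; elim: u x xs => [|a u IHu] x [|y xs] // path_x.
  by move=> -> k0; rewrite -k0 in k_gt0.
have [_ _ qx1 qx2] := lpath_runE path_x; case: path_x => step_xy path_y.
have [_ levels] := stepE step_xy.
have hit_x : q_accepts (last y xs) (a :: u) <-> q1_of x \in dfinal A1 \/ q2_of x \in dfinal A2.
  by rewrite /q_accepts -qx1 -qx2.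
rewrite [last x _]/= [size (a :: u)]/= => lev_x lev_z.
case: levels => [[_ lev_y miss1 miss2]|[_ lev_y acc_x]|[pos_x _ _]];
  last by rewrite lev_x in pos_x.
  have [le_k hit_u miss_u] := IHu _ _ path_y lev_y lev_z.
  split; first lia.
    by have -> : (size u).+1 - k = (size u - k).+1 by lia.
  case=> [|j] lt_jk /=; last by apply: miss_u; lia.
  by case/hit_x; apply/negP.
have := lpath_level_up path_y; rewrite lev_y lev_z => /(_ isT) size_u.
split; [lia | | by move=> j lt_jk; lia].
have -> : (size u).+1 - k = 0 by lia.
exact/hit_x.
Qed.

End Automaton.

Section Pumping.
Variables (Sigma : finType) (bar : Sigma -> Sigma) (k : nat) (A1 A2 : dfa Sigma).
Local Notation state := (nstate k A1 A2).
Hypotheses (bar_inv : involutive bar) (k_gt0 : 0 < k).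
Hypothesis hairpin_regular : regular (hairpin bar k (L1 A1) (L2 bar A2)).
Hypothesis accessible :
  forall x : state, isState bar x -> exists I u, initial bar I /\ reach bar I u x.
Hypothesis coaccessible :
  forall x : state, isState bar x -> exists F w, final bar F /\ reach bar x w F.

Lemma accepting_path_hit (I F : state) x beta :
  initial bar I -> reach bar I x F -> final bar F ->
  run (p1_of F) beta = q1_of F -> run (p2_of F) (barw bar beta) = q2_of F ->
  [/\ k <= size x, hairpin_hit bar (L1 A1) (L2 bar A2) beta x (size x - k)
    & forall j, j + k < size x -> ~ hairpin_hit bar (L1 A1) (L2 bar A2) beta x j].
Proof.
move=> /initialE [init1 init2 lev_I] [xs [path_I last_I]] final_F beta1 beta2.
have [lev_F _] := finalE final_F.
have [p1_F p2_F _ _] := lpath_runE path_I; rewrite last_I init1 init2 in p1_F p2_F.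
have hitE j : hairpin_hit bar (L1 A1) (L2 bar A2) beta x j <-> q_accepts bar F (drop j x).
  rewrite /hairpin_hit /L1 /L2 /accepts barw_cat_barw // !run_cat -p1_F -p2_F beta1 beta2.
  by [].
have := lpath_level_hit k_gt0 path_I lev_I; rewrite last_I => /(_ lev_F) [le_k hit miss].
by split => // [|j /miss]; rewrite hitE.
Qed.

(* Both paths lead [A1] and [A2] to the [p]-states of [F], so a mismatch between
   [x0] and [x1] would give one of them a hit more than [k] letters before its end. *)
Lemma hairpin_mixed_prefix (I F : state) x0 x1 beta :
  initial bar I -> final bar F -> reach bar I x0 F -> reach bar I x1 F ->
  run (p1_of F) beta = q1_of F -> run (p2_of F) (barw bar beta) = q2_of F ->
  size x0 <= size x1 -> hairpin bar k (L1 A1) (L2 bar A2) (x1 ++ beta ++ barw bar x0) ->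
  prefix x0 x1.
Proof.
move=> init_I final_F path0 path1 beta1 beta2 le_01 mem_01.
have [init1 init2 _] := initialE init_I.
have [_ _ miss0] := accepting_path_hit init_I path0 final_F beta1 beta2.
have [_ _ miss1] := accepting_path_hit init_I path1 final_F beta1 beta2.
have [run1_0 run2_0 _ _] := reach_runE path0; have [run1_1 run2_1 _ _] := reach_runE path1.
rewrite init1 init2 in run1_0 run2_0 run1_1 run2_1.
apply: contraT => not_pre; exfalso.
have [p lt_p [mem_L1|mem_L2]] := hairpin_mismatch bar_inv mem_01 le_01 not_pre.
  apply: (miss0 p lt_p); left; move: mem_L1.
  by rewrite /L1 /accepts !run_cat -run1_0 -run1_1.
apply: (miss1 p); first lia.
right; move: mem_L2; rewrite /L2 /accepts !barw_cat_barw //.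
by rewrite !run_cat -run2_0 -run2_1.
Qed.

Lemma loop_prefix (X F : state) L w :
  reach bar X L X -> 0 < size L -> reach bar X w F -> final bar F ->
  exists n, 0 < n /\ prefix w (flatten (nseq n L)).
Proof.
move=> loop_X pos_L path_w final_F.
have [I [u [init_I path_u]]] := accessible (reach_isState loop_X pos_L).
have [_ [beta [beta1 beta2]]] := finalE final_F.
pose x n := u ++ flatten (nseq n L) ++ w.
have path_x n : reach bar I (x n) F.
  rewrite /x catA; apply: reach_cat path_w.
  exact: reach_cat path_u (reach_flatten_nseq n loop_X).
have [M lang_M] := hairpin_regular.
(* pumping by multiples of [c] makes [L^t] longer than [w] *)
pose c := (size w).+1.
have [i [j [lt_ij]]] :=
  finite_pigeonhole (fun n => run (dinit M) (u ++ flatten (nseq (n * c) L))).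
have -> : j * c = i * c + (j - i) * c by rewrite -mulnDl subnKC // ltnW.
set m := i * c; set t := (j - i) * c => /= same_M.
have long_t : size w < size (flatten (nseq t L)).
  rewrite size_flatten_nseq /t /c -mulnA.
  apply: leq_trans (leq_pmull _ _); last by rewrite subn_gt0.
  exact: leq_trans (leq_pmulr _ pos_L).
exists t; split; first by rewrite muln_gt0 subn_gt0 lt_ij.
have mem_m : hairpin bar k (L1 A1) (L2 bar A2) (x m ++ beta ++ barw bar (x m)).
  have [le_k hit_m _] := accepting_path_hit init_I (path_x m) final_F beta1 beta2.
  exact: hairpin_hit_mem.
have mem_mt : hairpin bar k (L1 A1) (L2 bar A2) (x (m + t) ++ beta ++ barw bar (x m)).
  apply/lang_M; move/lang_M: mem_m; rewrite /accepts /x -!catA.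
  by rewrite [in X in X -> _]catA [in X in _ -> X]catA !(run_cat _ (u ++ _)) same_M.
have size_x : size (x m) <= size (x (m + t)).
  by rewrite /x !size_cat !size_flatten_nseq mulnDl; lia.
have := hairpin_mixed_prefix init_I final_F (path_x m) (path_x (m + t)) beta1 beta2
  size_x mem_mt.
have -> : x (m + t) = (u ++ flatten (nseq m L)) ++ flatten (nseq t L) ++ w.
  by rewrite /x flatten_nseqD !catA.
rewrite /x catA prefix_catr; last by [].
by rewrite eqxx andTb !prefixE (takel_cat _ (ltnW long_t)).
Qed.

Lemma loops_commute (X : state) L L' :
  reach bar X L X -> reach bar X L' X -> 0 < size L -> L ++ L' = L' ++ L.
Proof.
move=> loop_L loop_L' pos_L.
have [F [w [final_F path_w]]] := coaccessible (reach_isState loop_L pos_L).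
have [n1 [_]] := loop_prefix loop_L pos_L (reach_cat loop_L (reach_cat loop_L' path_w)) final_F.
have [n2 [_]] := loop_prefix loop_L pos_L (reach_cat loop_L' (reach_cat loop_L path_w)) final_F.
rewrite !catA => /catl_prefix pre2 /catl_prefix pre1.
by apply: prefix_flatten_nseq_eq pre1 pre2 _; rewrite !size_cat addnC.
Qed.

(* The loops commute, so they start with the same letter; the [q]-components
   of [Y] and [Y'] are the runs back along [s] and [s'], which agree because
   [a :: s] and [a :: s'] act as the identity on the [q]-states of [X]. *)
Lemma loop_step_det (X Y Y' : state) a b s s' :
  step bar X a Y -> reach bar Y s X -> step bar X b Y' -> reach bar Y' s' X ->
  a = b /\ Y = Y'.
Proof.
move=> step_a path_s step_b path_s'.
have loop_a := reach_cat (reach_step step_a) path_s.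
have loop_b := reach_cat (reach_step step_b) path_s'.
have [ab comm] := loops_commute loop_a loop_b isT; subst b.
have [[_ p1_Y p2_Y _ _] _] := stepE step_a.
have [[_ p1_Y' p2_Y' _ _] _] := stepE step_b.
have [_ _ q1_Y q2_Y] := reach_runE path_s.
have [_ _ q1_Y' q2_Y'] := reach_runE path_s'.
have [_ _ /esym loop1_a /esym loop2_a] := reach_runE loop_a.
have [_ _ /esym loop1_b /esym loop2_b] := reach_runE loop_b.
split => //; apply: nstate_eq.
- by rewrite p1_Y p1_Y'.
- by rewrite p2_Y p2_Y'.
- by rewrite q1_Y q1_Y' -(run_barw_loop s loop1_b) comm run_barw_loop.
- by rewrite q2_Y q2_Y' -(run_barw_loop s loop2_b) comm run_barw_loop.
- rewrite (loop_level0 (reach_cat path_s (reach_step step_a))) ?size_cat ?addn1 //.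
  by rewrite (loop_level0 (reach_cat path_s' (reach_step step_b))) ?size_cat ?addn1.
Qed.

Section StronglyConnected.
Variables (K : {set state}) (x0 : state).
Hypothesis K_scc :
  forall y, y \in K <-> (exists u, reach bar x0 u y) /\ (exists u, reach bar y u x0).

Lemma scc_reach (X Y : state) : X \in K -> Y \in K -> exists u, reach bar X u Y.
Proof.
move=> /K_scc [_ [u X_x0]] /K_scc [[v x0_Y] _].
by exists (u ++ v); apply: reach_cat X_x0 x0_Y.
Qed.

Lemma lpath_scc (X : state) u xs :
  X \in K -> lpath bar X u xs -> last X xs \in K -> all (mem K) xs.
Proof.
elim: u X xs => [|a u IHu] X [|Y xs] //= X_K [step_XY path_Y] last_K.
have Y_K : Y \in K.
  have [[v x0_X] _] := (K_scc X).1 X_K.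
  have [_ [v' last_x0]] := (K_scc _).1 last_K.
  apply/K_scc; split; first by exists (v ++ [:: a]); apply: reach_cat x0_X (reach_step step_XY).
  by exists (u ++ v'); apply: reach_cat last_x0; exists xs.
by rewrite Y_K (IHu _ _ Y_K path_Y last_K).
Qed.

Lemma lpath_scc_uniq (X : state) u u' xs xs' :
  X \in K -> lpath bar X u xs -> lpath bar X u' xs' ->
  all (mem K) xs -> all (mem K) xs' -> size u = size u' -> u = u' /\ xs = xs'.
Proof.
elim: u X u' xs xs' => [|a u IHu] X [|b u'] [|Y xs] [|Y' xs'] //= X_K.
move=> [step_a path_Y] [step_b path_Y'] /andP [Y_K xs_K] /andP [Y'_K xs'_K] [size_u].
have [s Y_X] := scc_reach Y_K X_K; have [s' Y'_X] := scc_reach Y'_K X_K.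
have [<- eq_Y] := loop_step_det step_a Y_X step_b Y'_X; subst Y'.
by have [-> ->] := IHu _ _ _ _ Y_K path_Y path_Y' xs_K xs'_K size_u.
Qed.

Variables (A : state) (vA : seq Sigma) (xs : seq state).
Hypotheses (A_K : A \in K) (path_A : lpath bar A vA xs) (loop_A : last A xs = A).
Hypotheses (xs_K : all (mem K) xs) (pos_vA : 0 < size vA).

(* Every path from [A] inside [K] follows the powers of the loop [vA]. *)
Lemma scc_sub_loop : {subset K <= xs}.
Proof.
have A_xs : A \in xs.
  have : xs != [::] by rewrite -size_eq0 (lpath_size path_A) -lt0n.
  by rewrite -[X in X \in _]loop_A; case: (xs) => // y ys _; exact: (mem_last y ys).
move=> B B_K; have [u [ys [path_u last_u]]] := scc_reach A_K B_K.
have ys_K : all (mem K) ys by apply: lpath_scc A_K path_u _; rewrite last_u.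
have path_n := lpath_take (size u) (lpath_flatten_nseq (size u) path_A loop_A).
have long : size u <= size (flatten (nseq (size u) vA)) by rewrite size_flatten_nseq leq_pmulr.
rewrite -last_u; have [_ ->] := lpath_scc_uniq A_K path_u path_n ys_K
  (all_take _ (all_flatten_nseq _ xs_K)) (esym (size_takel long)).
have := mem_last A (take (size u) (flatten (nseq (size u) xs))).
by rewrite inE => /orP [/eqP -> // | /mem_take /flattenP [s /nseqP [-> _]]].
Qed.

Lemma scc_loop_uniq : size vA <= #|K| -> uniq xs /\ size vA = #|K|.
Proof.
move=> le_vA_K; have size_xs := lpath_size path_A.
have le_K_xs : #|K| <= #|xs| by apply/subset_leq_card/subsetP/scc_sub_loop.
have := card_size xs; rewrite size_xs => le_xs_vA.
by split; [apply/card_uniqP; rewrite size_xs | ]; lia.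
Qed.

Lemma scc_loop_unique v : uniq xs -> reach bar A v A -> 0 < size v <= size vA -> v = vA.
Proof.
move=> uniq_xs [vs [path_v loop_v]] /andP [pos_v le_v_vA].
have size_xs := lpath_size path_A.
have vs_K : all (mem K) vs by apply: lpath_scc A_K path_v _; rewrite loop_v.
have [def_v def_vs] := lpath_scc_uniq A_K path_v (lpath_take (size v) path_A) vs_K
  (all_take _ xs_K) (esym (size_takel le_v_vA)).
suff eq_size : size v = size vA by rewrite def_v eq_size take_size.
have : last A (take (size v) xs) = last A xs by rewrite -def_vs loop_v loop_A.
rewrite -!nth_last size_takel ?size_xs // nth_take; last lia.
by move/eqP; rewrite nth_uniq ?size_xs => [/eqP|||]; lia.
Qed.

Lemma scc_loop_hamiltonian : size vA <= #|K| ->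
  [/\ forall B, B \in K -> count_mem B xs = 1, size vA = #|K|
    & forall v, reach bar A v A -> 0 < size v <= #|K| -> v = vA].
Proof.
move=> le_vA_K; have [uniq_xs size_vA] := scc_loop_uniq le_vA_K.
split=> // [B B_K | v loop_v]; first by rewrite count_uniq_mem // scc_sub_loop.
by rewrite -size_vA; apply: scc_loop_unique.
Qed.

End StronglyConnected.

End Pumping.

Theorem lemma6 (Sigma : finType) (bar : Sigma -> Sigma) (k : nat) (A1 A2 : dfa Sigma) :
  involutive bar -> 1 <= k ->
  regular (hairpin bar k (L1 A1) (L2 bar A2)) ->
  (forall x : nstate k A1 A2, isState bar x ->
     (exists i u, initial bar i /\ reach bar i u x) /\
     (exists f u, final bar f /\ reach bar x u f)) ->
  forall K : {set nstate k A1 A2}, is_scc bar K -> nontrivial_scc bar K ->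
  forall (A : nstate k A1 A2) (vA : seq Sigma) (xs : seq (nstate k A1 A2)),
    A \in K -> lpath bar A vA xs -> last A xs = A -> all (mem K) xs ->
    1 <= size vA <= #|K| ->
  forall (w : seq Sigma) (F : nstate k A1 A2), reach bar A w F -> final bar F ->
    (exists n, 0 < n /\ prefix w (flatten (nseq n vA))) /\
    (forall v, reach bar A v A -> 1 <= size v <= #|K| -> v = vA) /\
    (forall B, B \in K -> B != A -> count_mem B xs = 1) /\
    size vA = #|K|.
Proof.
move=> bar_inv k_gt0 hairpin_reg trim K [x0 [_ K_scc]] _ A vA xs A_K path_A loop_A xs_K.
move=> /andP [pos_vA le_vA_K] w F path_w final_F.
have accessible (x : nstate k A1 A2) :
    isState bar x -> exists I u, initial bar I /\ reach bar I u x.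
  by move=> state_x; case: (trim x state_x).
have coaccessible (x : nstate k A1 A2) :
    isState bar x -> exists F w, final bar F /\ reach bar x w F.
  by move=> state_x; case: (trim x state_x).
have [count_K size_vA unique_vA] := scc_loop_hamiltonian bar_inv k_gt0 hairpin_reg
  accessible coaccessible K_scc A_K path_A loop_A xs_K pos_vA le_vA_K.
have loop_vA : reach bar A vA A by exists xs.
split.
  exact (loop_prefix bar_inv k_gt0 hairpin_reg accessible loop_vA pos_vA path_w final_F).
by split; [exact: unique_vA | split=> // B B_K _; apply: count_K].
Qed.
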